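(* In the setting described in the context, let $\sigma_w,\sigma_v$ be real scalars and let $\Pi_\tau(s)=W^{1/2}\tilde\Sigma_\tau(s)$, where $$\tilde\Sigma_\tau(s)=R^T\big(sI+L_{e,s}^\tau RWR^T\big)^{-1}\begin{bmatrix}\sigma_wD_\tau^TE^{-1/2} & -\sigma_vL_{e,s}^\tau RW^{1/2}\end{bmatrix}.$$ Then $$\|\Pi_\tau\|_\infty^2=\sigma_w^2\,\bar\sigma(X)+\sigma_v^2,\qquad X=W^{1/2}R^T\big(RWR^TL_{e,s}^\tau RWR^T\big)^{-1}RW^{1/2}.$$
   Context: Let $\mathcal G$ be an undirected, connected graph without self-loops, with node set $\{1,\dots,n\}$ ($n\ge2$) and edge set $\mathcal E$, $m=|\mathcal E|$. Give each edge an arbitrary orientation; the incidence matrix $D\in\mathbb R^{n\times m}$ has $D_{il}=1$ if node $i$ is the initial node of edge $l$, $-1$ if it is the terminal node, and $0$ otherwise. Fix a spanning tree $\mathcal G_\tau$ and order the edges so the first $n-1$ are tree edges; write $D=[D_\tau\ D_c]$ with $D_\tau\in\mathbb R^{n\times(n-1)}$. Set $T_\tau^c=(D_\tau^TD_\tau)^{-1}D_\tau^TD_c$ and $R=[I_{n-1}\ T_\tau^c]\in\mathbb R^{(n-1)\times m}$. Let $W=\mathrm{diag}(w_1,\dots,w_m)$, $w_l>0$, and $E=\mathrm{diag}(\epsilon_1,\dots,\epsilon_n)$, $\epsilon_i>0$; powers of these diagonal matrices are taken entrywise. Define $L_{e,s}^\tau=D_\tau^TE^{-1}D_\tau$. For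 a stable transfer matrix $\Phi(s)$, $\|\Phi\|_\infty=\sup_{\omega\in\mathbb R}\bar\sigma(\Phi(j\omega))$ where $\bar\sigma$ is the largest singular value. *)

From HB Require Import structures.
From mathcomp Require Import all_boot all_order all_algebra.
From mathcomp Require Import all_classical all_reals all_analysis.
From mathcomp Require Import complex.
Set Implicit Arguments. Unset Strict Implicit. Unset Printing Implicit Defensive.
Import Order.TTheory GRing.Theory Num.Theory.
Local Open Scope ring_scope.
Local Open Scope classical_set_scope.

Definition simple_edges n m (src tgt : 'I_m -> 'I_n) : Prop :=
  (forall l, src l != tgt l) /\
  (forall l l', (src l == src l' /\ tgt l == tgt l') \/ (src l == tgt l' /\ tgt l == src l') -> l = l').

Definition adj_in n m (src tgt : 'I_m -> 'I_n) (S : pred 'I_m) : rel 'I_n :=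
  fun x y => [exists l : 'I_m, S l && (((src l == x) && (tgt l == y)) || ((src l == y) && (tgt l == x)))].

(* The edges in S form a spanning tree of the node set 'I_n : they connect all
   nodes and there are exactly n-1 of them (i.e. a connected subgraph on all
   nodes with n-1 edges, which is the same as a spanning tree). *)
Definition spanning_tree n m (src tgt : 'I_m -> 'I_n) (S : pred 'I_m) : Prop :=
  (forall x y : 'I_n, connect (adj_in src tgt S) x y) /\ #|S| = n.-1.

Definition graph_connected n m (src tgt : 'I_m -> 'I_n) : Prop :=
  forall x y : 'I_n, connect (adj_in src tgt predT) x y.

Definition incidence (R : ringType) n m (src tgt : 'I_m -> 'I_n) : 'M[R]_(n, m) :=
  \matrix_(i, l) (if src l == i then 1 else if tgt l == i then -1 else 0).

Definition first_edges p k : pred 'I_(p + k) := fun l => (l < p)%N.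

Section Mats.
Variable R : realType.
Variables n k : nat.
Local Notation m := (n.-1 + k)%N.

Definition Dtau (D : 'M[R]_(n, m)) : 'M[R]_(n, n.-1) := lsubmx D.
Definition Dc (D : 'M[R]_(n, m)) : 'M[R]_(n, k) := rsubmx D.
Definition Ttauc (D : 'M[R]_(n, m)) : 'M[R]_(n.-1, k) :=
  invmx ((Dtau D)^T *m Dtau D) *m (Dtau D)^T *m Dc D.
Definition Rmat (D : 'M[R]_(n, m)) : 'M[R]_(n.-1, m) := row_mx 1%:M (Ttauc D).

Definition diagf p (f : 'I_p -> R) : 'M[R]_p := diag_mx (\row_i f i).
Definition Wm (w : 'I_m -> R) := diagf w.
Definition Wsqrt (w : 'I_m -> R) := diagf (fun l => Num.sqrt (w l)).
Definition Einv (eps : 'I_n -> R) := diagf (fun i => (eps i)^-1).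
Definition Einvsqrt (eps : 'I_n -> R) := diagf (fun i => (Num.sqrt (eps i))^-1).

Definition Les (D : 'M[R]_(n, m)) (eps : 'I_n -> R) : 'M[R]_(n.-1) :=
  (Dtau D)^T *m Einv eps *m Dtau D.

Definition Xmat (D : 'M[R]_(n, m)) w eps : 'M[R]_m :=
  let Rm := Rmat D in
  Wsqrt w *m Rm^T
    *m invmx (Rm *m Wm w *m Rm^T *m Les D eps *m Rm *m Wm w *m Rm^T)
    *m Rm *m Wsqrt w.

Local Open Scope complex_scope.
Definition toC p q (A : 'M[R]_(p, q)) : 'M[R[i]]_(p, q) := map_mx (fun r => r%:C) A.

Definition Pitau (D : 'M[R]_(n, m)) w eps (sw sv : R) (s : R[i]) : 'M[R[i]]_(m, n + m) :=
  let Rm := Rmat D in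
  toC (Wsqrt w *m Rm^T)
    *m invmx (s%:M + toC (Les D eps *m Rm *m Wm w *m Rm^T))
    *m row_mx (toC (sw *: ((Dtau D)^T *m Einvsqrt eps)))
              (toC (- sv *: (Les D eps *m Rm *m Wsqrt w))).
End Mats.

Section Norms.
Variable R : realType.
Local Open Scope complex_scope.

Definition vnorm2 p (x : 'cV[R[i]]_p) : R :=
  \sum_i (complex.Re (x i 0) ^+ 2 + complex.Im (x i 0) ^+ 2).

(* largest singular value = induced Euclidean (spectral) norm *)
Definition sigma_max p q (A : 'M[R[i]]_(p, q)) : R :=
  sup [set Num.sqrt (vnorm2 (A *m x)) | x in [set x : 'cV[R[i]]_q | vnorm2 x = 1]].

Definition hinf_norm p q (Phi : R[i] -> 'M[R[i]]_(p, q)) : \bar R :=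
  ereal_sup [set (sigma_max (Phi ((0 : R) +i* w)))%:E | w in [set: R]].
End Norms.

From HB Require Import structures.
From mathcomp Require Import all_boot all_order all_algebra.
From mathcomp Require Import all_classical all_reals all_analysis.
From mathcomp Require Import complex sesquilinear spectral.
From mathcomp Require Import ring lra zify.
Set Implicit Arguments. Unset Strict Implicit. Unset Printing Implicit Defensive.
Import Order.TTheory GRing.Theory Num.Theory.
Local Open Scope ring_scope.
Local Open Scope sesquilinear_scope.

(* With K := W^{1/2} R^T and F := E^{-1/2} D_tau one has L_{e,s}^tau = F^T F =: L and
   R W R^T = K^T K =: M, both invertible because D_tau and R have rank n-1, and
   X = B B^T for B := K M^-1 L^-1 F^T, so that sigma(X) = sigma(B^T)^2.
   For every y, Pi_tau(s)^H y = (sw B^T z, -sv z) with z := K (s^* L^-1 + M)^-1 K^T y.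
   On the imaginary axis s^* <u, L^-1 u> is purely imaginary, whence |z|^2 = Re <z, y>,
   so |z| <= |y| and sigma(Pi_tau(jw))^2 <= sw^2 sigma(B^T)^2 + sv^2.  At s = 0, z is
   the orthogonal projection P y onto the range of K and B^T P = B^T, so testing
   Pi_tau(0)^H on the range of P shows that the bound is attained. *)

Lemma invmx_mul (R : comUnitRingType) n (A B : 'M[R]_n) :
  A \in unitmx -> B \in unitmx -> invmx (A *m B) = invmx B *m invmx A.
Proof.
move=> Au Bu; have ABu : A *m B \in unitmx by rewrite unitmx_mul Au Bu.
have inv_r : A *m B *m (invmx B *m invmx A) = 1%:M.
  by rewrite -mulmxA [B *m _]mulmxA mulmxV // mul1mx mulmxV.
by rewrite -[LHS]mulmx1 -inv_r mulmxA mulVmx // mul1mx.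
Qed.

Lemma unitmx_inj (R : fieldType) n (A : 'M[R]_n) :
  (forall v : 'cV_n, A *m v = 0 -> v = 0) -> A \in unitmx.
Proof.
move=> Ainj; rewrite -unitmx_tr -row_free_unit -kermx_eq0; apply/rowV0P => v /sub_kermxP vAt0.
have /Ainj vt0 : A *m v^T = 0 by rewrite -[A]trmxK -trmx_mul vAt0 trmx0.
by rewrite -[v]trmxK vt0 trmx0.
Qed.

Section GramMatrix.
Variable R : realFieldType.

Lemma mulmx_trmx_eq0 p q (A : 'M[R]_(p, q)) (v : 'cV[R]_q) :
  A^T *m A *m v = 0 -> A *m v = 0.
Proof.
move=> AtAv0; have : ((A *m v)^T *m (A *m v)) 0 0 = 0.
  by rewrite trmx_mul -mulmxA [A^T *m _]mulmxA AtAv0 mulmx0 mxE.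
have sq_ge0 (i : 'I_p) : true -> 0 <= (A *m v)^T 0 i * (A *m v) i 0.
  by move=> _; rewrite mxE -expr2 sqr_ge0.
rewrite mxE => /(psumr_eq0P sq_ge0) Av0; apply/colP => i.
by have /eqP := Av0 i isT; rewrite mxE mulf_eq0 orbb => /eqP ->; rewrite mxE.
Qed.

Lemma unitmx_gram p q (A : 'M[R]_(p, q)) : \rank A = q -> A^T *m A \in unitmx.
Proof.
move=> rkA; apply: unitmx_inj => v /mulmx_trmx_eq0 Av0.
have freeAt : row_free A^T by rewrite /row_free mxrank_tr rkA.
by apply/eqP; rewrite -trmx_eq0 -(mulmx_free_eq0 _ freeAt) -trmx_mul Av0 trmx0.
Qed.

End GramMatrix.

Section ComplexOfReal.
Variable R : realType.

Lemma toC_mul p q r (A : 'M[R]_(p, q)) (B : 'M[R]_(q, r)) : toC (A *m B) = toC A *m toC B.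
Proof. exact: map_mxM. Qed.

Lemma toC_scale p q (a : R) (A : 'M[R]_(p, q)) : toC (a *: A) = a%:C%C *: toC A.
Proof. exact: map_mxZ. Qed.

Lemma toC_1 p : toC (1%:M : 'M[R]_p) = 1%:M.
Proof. exact: map_mx1. Qed.

Lemma toC_invmx p (A : 'M[R]_p) : toC (invmx A) = invmx (toC A).
Proof. exact: map_invmx. Qed.

Lemma toC_unitmx p (A : 'M[R]_p) : (toC A \in unitmx) = (A \in unitmx).
Proof. exact: map_unitmx. Qed.

End ComplexOfReal.

Section ComplexConjugate.
Variable R : realType.
Local Notation C := R[i].

Lemma conj_real_complex (t : R) : (t%:C%C)^* = t%:C%C :> C.
Proof. exact: conjc_real. Qed.

Lemma Re_realM (t : R) (z : C) : complex.Re (t%:C%C * z) = t * complex.Re z.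
Proof. by case: z => a b /=; rewrite mul0r subr0. Qed.

Lemma Re_conj (z : C) : complex.Re z^* = complex.Re z.
Proof. by case: z. Qed.

Lemma Re_mul_imaginary_real (s z : C) :
  complex.Re s = 0 -> complex.Im z = 0 -> complex.Re (s * z) = 0.
Proof. by case: s => a b /= ->; case: z => c d /= ->; rewrite mul0r mulr0 subrr. Qed.

Lemma trmxC_mul p q r (A : 'M[C]_(p, q)) (B : 'M[C]_(q, r)) :
  (A *m B) ^t* = B ^t* *m A ^t*.
Proof. by rewrite trmx_mul map_mxM. Qed.

Lemma trmxC_add p q (A B : 'M[C]_(p, q)) : (A + B) ^t* = A ^t* + B ^t*.
Proof. by rewrite linearD map_mxD. Qed.

Lemma trmxC_scalar p (a : C) : (a%:M) ^t* = (a^*)%:M :> 'M[C]_p.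
Proof. by rewrite tr_scalar_mx map_scalar_mx. Qed.

Lemma trmxC_inv p (A : 'M[C]_p) : (invmx A) ^t* = invmx (A ^t*).
Proof. by rewrite trmx_inv map_invmx. Qed.

Lemma trmxC_row p q1 q2 (A : 'M[C]_(p, q1)) (B : 'M[C]_(p, q2)) :
  (row_mx A B) ^t* = col_mx (A ^t*) (B ^t*).
Proof. by rewrite tr_row_mx map_col_mx. Qed.

Lemma trmxC_real p q (A : 'M[R]_(p, q)) : (toC A) ^t* = toC A^T.
Proof. by apply/matrixP => i j; rewrite !mxE conj_real_complex. Qed.

End ComplexConjugate.

Section InnerProduct.
Variable R : realType.
Local Notation C := R[i].

Definition cdot p (x y : 'cV[C]_p) : C := (x ^t* *m y) 0 0.

Lemma vnorm2_cdot p (x : 'cV[C]_p) : (vnorm2 x)%:C%C = cdot x x.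
Proof.
rewrite /vnorm2 /cdot mxE rmorph_sum; apply: eq_bigr => i _.
by rewrite !mxE /= add_Re2_Im2 sqr_normc mulrC.
Qed.

Lemma vnorm2_ge0 p (x : 'cV[C]_p) : 0 <= vnorm2 x.
Proof. by apply: sumr_ge0 => i _; rewrite addr_ge0 ?sqr_ge0. Qed.

Lemma vnorm20 p : vnorm2 (0 : 'cV[C]_p) = 0.
Proof. by rewrite /vnorm2 big1 // => i _; rewrite mxE /= expr0n /= addr0. Qed.

Lemma vnorm2_eq0 p (x : 'cV[C]_p) : vnorm2 x = 0 -> x = 0.
Proof.
have sq_ge0 (i : 'I_p) : true -> 0 <= complex.Re (x i 0) ^+ 2 + complex.Im (x i 0) ^+ 2.
  by move=> _; rewrite addr_ge0 ?sqr_ge0.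
move=> /(psumr_eq0P sq_ge0) x0; apply/colP => i; rewrite mxE.
move: (x0 i isT); case: (x i 0) => a b /= /eqP.
by rewrite paddr_eq0 ?sqr_ge0 // !sqrf_eq0 => /andP[/eqP -> /eqP ->].
Qed.

Lemma cdot_adj p q (A : 'M[C]_(p, q)) x y : cdot x (A *m y) = cdot (A ^t* *m x) y.
Proof. by rewrite /cdot trmxC_mul trmxCK mulmxA. Qed.

Lemma cdotC p (x y : 'cV[C]_p) : cdot y x = (cdot x y)^*.
Proof.
rewrite /cdot !mxE rmorph_sum; apply: eq_bigr => i _.
by rewrite !mxE rmorphM /= conjCK mulrC.
Qed.

Lemma cdotDr p (x y z : 'cV[C]_p) : cdot x (y + z) = cdot x y + cdot x z.
Proof. by rewrite /cdot mulmxDr mxE. Qed.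

Lemma cdotNr p (x y : 'cV[C]_p) : cdot x (- y) = - cdot x y.
Proof. by rewrite /cdot mulmxN mxE. Qed.

Lemma cdotZr p (x y : 'cV[C]_p) a : cdot x (a *: y) = a * cdot x y.
Proof. by rewrite /cdot -scalemxAr mxE. Qed.

Lemma cdotDl p (x y z : 'cV[C]_p) : cdot (y + z) x = cdot y x + cdot z x.
Proof. by rewrite cdotC cdotDr rmorphD /= -!cdotC. Qed.

Lemma cdotNl p (x y : 'cV[C]_p) : cdot (- y) x = - cdot y x.
Proof. by rewrite cdotC cdotNr rmorphN /= -cdotC. Qed.

Lemma cdotZl p (x y : 'cV[C]_p) a : cdot (a *: y) x = a^* * cdot y x.
Proof. by rewrite cdotC cdotZr rmorphM /= -cdotC. Qed.

Lemma Re_cdotC p (x y : 'cV[C]_p) : complex.Re (cdot y x) = complex.Re (cdot x y).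
Proof. by rewrite cdotC; case: (cdot x y). Qed.

Lemma Re_cdotxx p (x : 'cV[C]_p) : complex.Re (cdot x x) = vnorm2 x.
Proof. by rewrite -vnorm2_cdot. Qed.

Lemma vnorm2Z p (t : R) (x : 'cV[C]_p) : vnorm2 (t%:C%C *: x) = t ^+ 2 * vnorm2 x.
Proof.
by rewrite -!Re_cdotxx cdotZl cdotZr conj_real_complex mulrA -rmorphM Re_realM expr2.
Qed.

Lemma vnorm2N p (x : 'cV[C]_p) : vnorm2 (- x) = vnorm2 x.
Proof. by rewrite -!Re_cdotxx cdotNl cdotNr opprK. Qed.

Lemma vnorm2D p (x y : 'cV[C]_p) :
  vnorm2 (x + y) = vnorm2 x + 2 * complex.Re (cdot x y) + vnorm2 y.
Proof.
rewrite -!Re_cdotxx cdotDl !cdotDr !raddfD /= [complex.Re (cdot y x)]Re_cdotC.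
by rewrite !Re_cdotxx; lra.
Qed.

Lemma Re_cdot_sqr_le p (x y : 'cV[C]_p) :
  complex.Re (cdot x y) ^+ 2 <= vnorm2 x * vnorm2 y.
Proof.
set a := vnorm2 x; set b := complex.Re (cdot x y); set c := vnorm2 y.
have [/vnorm2_eq0 x0|a_neq0] := eqVneq a 0.
  by rewrite /b x0 /cdot trmx0 map_mx0 mul0mx mxE expr0n /= mulr_ge0 ?vnorm2_ge0.
have a_gt0 : 0 < a by rewrite lt_def a_neq0 vnorm2_ge0.
have quad t : 0 <= t ^+ 2 * a - 2 * t * b + c.
  have := vnorm2_ge0 (t%:C%C *: x - y).
  by rewrite vnorm2D vnorm2Z vnorm2N cdotZl cdotNr conj_real_complex mulrN raddfN /= Re_realM -/a -/b -/c; lra.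
have := quad (b / a).
have -> : (b / a) ^+ 2 * a - 2 * (b / a) * b + c = (a * c - b ^+ 2) / a by field; rewrite gt_eqF.
by rewrite pmulr_lge0 ?invr_gt0 // subr_ge0.
Qed.

Lemma vnorm2_col p1 p2 (x : 'cV[C]_p1) (y : 'cV[C]_p2) :
  vnorm2 (col_mx x y) = vnorm2 x + vnorm2 y.
Proof.
by rewrite /vnorm2 big_split_ord; congr (_ + _); apply: eq_bigr => i _; rewrite ?col_mxEu ?col_mxEd.
Qed.

Lemma Im_cdot_hermitian p (A : 'M[C]_p) x : A ^t* = A -> complex.Im (cdot x (A *m x)) = 0.
Proof.
move=> Aherm; have : cdot x (A *m x) = (cdot x (A *m x))^* by rewrite -cdotC cdot_adj Aherm.
by case: (cdot x (A *m x)) => a b [] /eqP; rewrite -subr_eq0 opprK -mulr2n mulrn_eq0 => /eqP.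
Qed.

Lemma cdot_gram p q (A : 'M[R]_(p, q)) v :
  cdot v (toC (A^T *m A) *m v) = cdot (toC A *m v) (toC A *m v).
Proof. by rewrite toC_mul -mulmxA cdot_adj trmxC_real trmxK. Qed.

Lemma vnorm2_mulmx_le p q (A : 'M[C]_(p, q)) :
  exists c : R, forall x, vnorm2 (A *m x) <= c * vnorm2 x.
Proof.
pose a i : 'cV[C]_q := (row i A) ^t*.
exists (\sum_i 2 * vnorm2 (a i)) => x; rewrite mulr_suml {1}/vnorm2.
apply: ler_sum => i _.
have Axi : (A *m x) i 0 = cdot (a i) x by rewrite /cdot trmxCK -row_mul [RHS]mxE.
have Im_cdot : complex.Im (cdot (a i) x) = complex.Re (cdot ('i%C *: a i) x).
  by rewrite cdotZl; case: (cdot (a i) x) => u v /=; ring.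
have norm_ia : vnorm2 ('i%C *: a i) = vnorm2 (a i).
  by rewrite -!Re_cdotxx cdotZl cdotZr mulrA; case: (cdot (a i) (a i)) => u v /=; ring.
have := Re_cdot_sqr_le (a i) x; have := Re_cdot_sqr_le ('i%C *: a i) x.
by rewrite -Im_cdot norm_ia -Axi; lra.
Qed.

End InnerProduct.

Section SpectralNorm.
Variable R : realType.
Local Notation C := R[i].

Lemma exists_vnorm2_eq1 q : (0 < q)%N -> exists x : 'cV[C]_q, vnorm2 x = 1.
Proof.
case: q => // q _; exists (delta_mx 0 0); rewrite /vnorm2 (bigD1 0) //= big1.
  by rewrite !mxE /= expr1n expr0n /= !addr0.
by move=> i /negPf i_neq0; rewrite !mxE i_neq0 /= expr0n /= addr0.
Qed.

Lemma sigma_max_ubound p q (A : 'M[C]_(p, q)) :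
  has_ubound [set Num.sqrt (vnorm2 (A *m x)) | x in [set x | vnorm2 x = 1]].
Proof.
have [c Ale] := vnorm2_mulmx_le A.
by exists (Num.sqrt c) => _ [x /= x1 <-]; apply: ler_wsqrtr; rewrite -[c]mulr1 -x1.
Qed.

Lemma vnorm2_le_sigma_max p q (A : 'M[C]_(p, q)) x :
  vnorm2 (A *m x) <= sigma_max A ^+ 2 * vnorm2 x.
Proof.
have [/vnorm2_eq0 ->|x_neq0] := eqVneq (vnorm2 x) 0.
  by rewrite mulmx0 !vnorm20 mulr0.
have x_gt0 : 0 < vnorm2 x by rewrite lt_def x_neq0 vnorm2_ge0.
pose t := (Num.sqrt (vnorm2 x))^-1.
have t2 : t ^+ 2 * vnorm2 x = 1 by rewrite exprVn sqr_sqrtr ?mulVf ?vnorm2_ge0.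
have le_sup : Num.sqrt (vnorm2 (A *m (t%:C%C *: x))) <= sigma_max A.
  by apply: ub_le_sup; [exact: sigma_max_ubound | exists (t%:C%C *: x); rewrite //= vnorm2Z].
have sigma_ge0 : 0 <= sigma_max A := le_trans (sqrtr_ge0 _) le_sup.
rewrite -(ler_pXn2r (n := 2)) ?nnegrE ?sqrtr_ge0 // sqr_sqrtr ?vnorm2_ge0 // in le_sup.
rewrite -scalemxAr vnorm2Z in le_sup.
have t2_gt0 : 0 < t ^+ 2 by rewrite exprn_gt0 // invr_gt0 sqrtr_gt0.
by rewrite -(ler_pM2l t2_gt0) mulrCA t2 mulr1.
Qed.

Lemma sigma_max_ge0 p q (A : 'M[C]_(p, q)) : (0 < q)%N -> 0 <= sigma_max A.
Proof.
move=> /exists_vnorm2_eq1 [x x1]; apply: le_trans (sqrtr_ge0 (vnorm2 (A *m x))) _.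
by apply: ub_le_sup; [exact: sigma_max_ubound | exists x].
Qed.

Lemma sigma_max_sqr_le p q (A : 'M[C]_(p, q)) (c : R) : (0 < q)%N -> 0 <= c ->
  (forall x, vnorm2 (A *m x) <= c * vnorm2 x) -> sigma_max A ^+ 2 <= c.
Proof.
move=> q_gt0 c_ge0 Ale; rewrite -(sqr_sqrtr c_ge0) ler_pXn2r ?nnegrE ?sigma_max_ge0 ?sqrtr_ge0 //.
apply: ge_sup => [|_ [x /= x1 <-]].
  by have [x x1] := exists_vnorm2_eq1 q_gt0; exists (Num.sqrt (vnorm2 (A *m x))), x.
by apply: ler_wsqrtr; rewrite -[c]mulr1 -x1.
Qed.

Lemma vnorm2_adj_le p q (A : 'M[C]_(p, q)) (c : R) : 0 <= c ->
  (forall x, vnorm2 (A *m x) <= c * vnorm2 x) ->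
  forall y, vnorm2 (A ^t* *m y) <= c * vnorm2 y.
Proof.
move=> c_ge0 Ale y; set z := A ^t* *m y.
have z2 : vnorm2 z = complex.Re (cdot y (A *m z)) by rewrite cdot_adj Re_cdotxx.
have sq_le : vnorm2 z ^+ 2 <= (c * vnorm2 y) * vnorm2 z.
  have := Re_cdot_sqr_le y (A *m z); rewrite -z2.
  by have := Ale z; have := vnorm2_ge0 y; nra.
have [z0|z_neq0] := eqVneq (vnorm2 z) 0; first by rewrite z0 mulr_ge0 ?vnorm2_ge0.
have z_gt0 : 0 < vnorm2 z by rewrite lt_def z_neq0 vnorm2_ge0.
by rewrite -(ler_pM2r z_gt0) -expr2.
Qed.

Lemma Re_cdot_le_sigma_max p (A : 'M[C]_p) x : (0 < p)%N ->
  complex.Re (cdot x (A *m x)) <= sigma_max A * vnorm2 x.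
Proof.
move=> p_gt0; have := Re_cdot_sqr_le x (A *m x); have := vnorm2_le_sigma_max A x.
have := sigma_max_ge0 A p_gt0; have := vnorm2_ge0 x.
set r := complex.Re _; set s := sigma_max A; set a := vnorm2 x; set b := vnorm2 _.
move=> a_ge0 s_ge0 b_le r2_le; have r2 : r ^+ 2 <= (s * a) ^+ 2 by nra.
have [r_le0|r_gt0] := lerP r 0; first by rewrite (le_trans r_le0) ?mulr_ge0.
by rewrite -(ler_pXn2r (_ : 0 < 2)%N) // nnegrE ?mulr_ge0 // ltW.
Qed.

Lemma sigma_max_gram p q (A : 'M[C]_(p, q)) : (0 < p)%N ->
  sigma_max (A *m A ^t*) = sigma_max (A ^t*) ^+ 2.
Proof.
move=> p_gt0; set s := sigma_max (A ^t*).
have s_ge0 : 0 <= s by exact: sigma_max_ge0.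
have Ale x : vnorm2 (A *m x) <= s ^+ 2 * vnorm2 x.
  by rewrite -[A]trmxCK; apply: vnorm2_adj_le (sqr_ge0 s) _ x => y; exact: vnorm2_le_sigma_max.
apply/eqP; rewrite eq_le; apply/andP; split.
  rewrite -(ler_pXn2r (n := 2)) ?nnegrE ?sigma_max_ge0 ?exprn_ge0 //.
  apply: sigma_max_sqr_le => [||x]; rewrite ?exprn_ge0 //.
  rewrite -mulmxA; apply: le_trans (Ale _) _.
  by rewrite [s ^+ 2 ^+ 2]expr2 -mulrA ler_wpM2l ?exprn_ge0 // vnorm2_le_sigma_max.
apply: sigma_max_sqr_le => [||x]; rewrite ?sigma_max_ge0 //.
by rewrite -Re_cdotxx -cdot_adj mulmxA Re_cdot_le_sigma_max.
Qed.

End SpectralNorm.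

Section TransferMatrix.
Variable R : realType.
Local Notation C := R[i].
Variables (r m nn : nat) (K : 'M[R]_(m, r)) (F : 'M[R]_(nn, r)) (sw sv : R).
Hypotheses (rkK : \rank K = r) (rkF : \rank F = r) (r_gt0 : (0 < r)%N).

Local Notation L := (F^T *m F).
Local Notation M := (K^T *m K).
Local Notation N := (invmx L).
Local Notation Mi := (invmx M).
Local Notation B := (K *m Mi *m N *m F^T).
Local Notation P := (K *m Mi *m K^T).
Local Notation X := (K *m invmx (M *m L *m M) *m K^T).

Definition transfer (s : C) : 'M[C]_(m, nn + m) :=
  toC K *m invmx (s%:M + toC (L *m M))
    *m row_mx (toC (sw *: F^T)) (toC (- sv *: (L *m K^T))).

Definition transfer_state (s : C) (y : 'cV[C]_m) : 'cV[C]_m :=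
  toC K *m (invmx (s^* *: toC N + toC M) *m (toC K^T *m y)).

Let L_unit : L \in unitmx := unitmx_gram rkF.
Let M_unit : M \in unitmx := unitmx_gram rkK.

Let m_gt0 : (0 < m)%N.
Proof. by apply: (leq_trans r_gt0); rewrite -{1}rkK rank_leq_row. Qed.

Let N_sym : N^T = N.
Proof. by rewrite trmx_inv trmx_mul trmxK. Qed.

Let Mi_sym : Mi^T = Mi.
Proof. by rewrite trmx_inv trmx_mul trmxK. Qed.

Let N_herm : (toC N) ^t* = toC N.
Proof. by rewrite trmxC_real N_sym. Qed.

Let trB : B^T = F *m N *m Mi *m K^T.
Proof. by rewrite !trmx_mul !trmxK N_sym Mi_sym !mulmxA. Qed.

Lemma trmx_mulmx_K : B^T *m K = F *m N.
Proof. by rewrite trB -!mulmxA mulVmx // mulmx1. Qed.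

Lemma P_mulmx_K : P *m K = K.
Proof. by rewrite -!mulmxA mulVmx // mulmx1. Qed.

Lemma P_idem : P *m P = P.
Proof. by rewrite !mulmxA P_mulmx_K. Qed.

Lemma trmx_mulmx_P : B^T *m P = B^T.
Proof. by rewrite !mulmxA trmx_mulmx_K trB. Qed.

Lemma X_factor : X = B *m B^T.
Proof.
rewrite !invmx_mul ?unitmx_mul ?L_unit ?M_unit // trB -!mulmxA.
by rewrite [F^T *m (F *m _)]mulmxA mulKmx.
Qed.

Lemma transfer_state0 y : transfer_state 0 y = toC P *m y.
Proof. by rewrite /transfer_state rmorph0 scale0r add0r -toC_invmx !mulmxA -!toC_mul. Qed.

Lemma shifted_unitmx (s : C) : complex.Re s = 0 -> s *: toC N + toC M \in unitmx.
Proof.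
move=> Res0; apply: unitmx_inj => v Sv0.
have : complex.Re (cdot v ((s *: toC N + toC M) *m v)) = 0.
  by rewrite Sv0 /cdot mulmx0 mxE.
rewrite mulmxDl -scalemxAl cdotDr cdotZr raddfD /= cdot_gram Re_cdotxx.
rewrite Re_mul_imaginary_real ?Im_cdot_hermitian // add0r => /vnorm2_eq0 Kv0.
have MC_unit : toC M \in unitmx by rewrite toC_unitmx.
by rewrite -(mulKmx MC_unit v) toC_mul -mulmxA Kv0 !mulmx0.
Qed.

Lemma vnorm2_transfer_adj (s : C) y : complex.Re s = 0 ->
  vnorm2 ((transfer s) ^t* *m y) =
  sw ^+ 2 * vnorm2 (toC B^T *m transfer_state s y) + sv ^+ 2 * vnorm2 (transfer_state s y).
Proof.
move=> Res0; have S_unit := shifted_unitmx (etrans (Re_conj s) Res0).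
set S := s^* *: toC N + toC M.
have adj_shift : (s%:M + toC (L *m M)) ^t* = S *m toC L.
  rewrite trmxC_add trmxC_scalar trmxC_real !trmx_mul !trmxK mulmxDl -scalemxAl.
  by rewrite -!toC_mul mulVmx // toC_1 scalemx1 mulmxA.
have -> : (transfer s) ^t* *m y =
    col_mx (sw%:C%C *: (toC B^T *m transfer_state s y)) ((- sv)%:C%C *: transfer_state s y).
  rewrite /transfer !trmxC_mul trmxC_row !trmxC_real trmxC_inv adj_shift.
  rewrite invmx_mul ?toC_unitmx // -toC_invmx.
  rewrite [(sw *: _)^T]linearZ [(- sv *: _)^T]linearZ /= trmxK trmx_mul trmxK.
  rewrite /transfer_state !toC_scale !mul_col_mx -!scalemxAl.
  congr (col_mx (_ *: _) (_ *: _)); rewrite !mulmxA.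
    by rewrite -[toC B^T *m _]toC_mul trmx_mulmx_K toC_mul.
  by rewrite trmx_mul trmxK -toC_mul mulmxK.
by rewrite vnorm2_col !vnorm2Z sqrrN.
Qed.

Lemma vnorm2_transfer_state_le (s : C) y : complex.Re s = 0 ->
  vnorm2 (transfer_state s y) <= vnorm2 y.
Proof.
move=> Res0; have S_unit := shifted_unitmx (etrans (Re_conj s) Res0).
rewrite /transfer_state; set u := invmx _ *m _; set z := toC K *m u.
have Su : (s^* *: toC N + toC M) *m u = toC K^T *m y by rewrite mulKVmx.
have z2 : vnorm2 z = complex.Re (cdot z y).
  have -> : cdot z y = cdot u (toC K^T *m y) by rewrite cdot_adj trmxC_real trmxK.
  rewrite -Re_cdotxx -cdot_gram -Su mulmxDl -scalemxAl cdotDr cdotZr raddfD /=.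
  by rewrite Re_mul_imaginary_real ?Re_conj ?Im_cdot_hermitian ?add0r.
have := Re_cdot_sqr_le z y; rewrite -z2.
by have := vnorm2_ge0 z; have := vnorm2_ge0 y; nra.
Qed.

Local Notation sigmaB := (sigma_max (toC B^T)).

Lemma transfer_gt0 : (0 < nn + m)%N.
Proof. by rewrite addn_gt0 m_gt0 orbT. Qed.

Lemma sigma_max_transfer_le (s : C) : complex.Re s = 0 ->
  sigma_max (transfer s) ^+ 2 <= sw ^+ 2 * sigmaB ^+ 2 + sv ^+ 2.
Proof.
move=> Res0; have c_ge0 : 0 <= sw ^+ 2 * sigmaB ^+ 2 + sv ^+ 2.
  by rewrite addr_ge0 ?sqr_ge0 // mulr_ge0 ?sqr_ge0.
have adj_le y : vnorm2 ((transfer s) ^t* *m y) <= (sw ^+ 2 * sigmaB ^+ 2 + sv ^+ 2) * vnorm2 y.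
  rewrite vnorm2_transfer_adj //; set z := transfer_state s y.
  apply: le_trans (_ : _ <= (sw ^+ 2 * sigmaB ^+ 2 + sv ^+ 2) * vnorm2 z) _.
    by rewrite mulrDl -mulrA lerD2r ler_wpM2l ?sqr_ge0 ?vnorm2_le_sigma_max.
  by rewrite ler_wpM2l ?vnorm2_transfer_state_le.
have := vnorm2_adj_le c_ge0 adj_le; rewrite trmxCK => Pi_le.
exact: sigma_max_sqr_le transfer_gt0 c_ge0 Pi_le.
Qed.

Lemma vnorm2_transfer0_adj_range y :
  sw ^+ 2 * vnorm2 (toC B^T *m y) + sv ^+ 2 * vnorm2 (toC P *m y)
    <= sigma_max (transfer 0) ^+ 2 * vnorm2 (toC P *m y).
Proof.
have := vnorm2_transfer_adj (toC P *m y) (erefl : complex.Re 0 = 0).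
rewrite !transfer_state0 !mulmxA -!toC_mul P_idem !trmx_mulmx_P => <-.
rewrite -mulmxA; apply: vnorm2_adj_le (sqr_ge0 _) _ _ => x; exact: vnorm2_le_sigma_max.
Qed.

Lemma sigma_max_transfer0_ge : sw ^+ 2 * sigmaB ^+ 2 + sv ^+ 2 <= sigma_max (transfer 0) ^+ 2.
Proof.
set s0 := sigma_max (transfer 0).
have sv_le : sv ^+ 2 <= s0 ^+ 2.
  have [e e1] := exists_vnorm2_eq1 R r_gt0; set y0 := toC K *m e.
  have Py0 : toC P *m y0 = y0 by rewrite mulmxA -toC_mul P_mulmx_K.
  have y0_gt0 : 0 < vnorm2 y0.
    rewrite lt_def vnorm2_ge0 andbT; apply: contra_neq (oner_neq0 R) => /vnorm2_eq0 Ke0.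
    have MC_unit : toC M \in unitmx by rewrite toC_unitmx.
    by rewrite -e1 -(mulKmx MC_unit e) toC_mul -mulmxA -/y0 Ke0 !mulmx0 vnorm20.
  have := vnorm2_transfer0_adj_range y0; rewrite Py0 -/s0.
  have := mulr_ge0 (sqr_ge0 sw) (vnorm2_ge0 (toC B^T *m y0)).
  by move=> B_ge0 y0_le; rewrite -(ler_pM2r y0_gt0); lra.
have B_le y : sw ^+ 2 * vnorm2 (toC B^T *m y) <= (s0 ^+ 2 - sv ^+ 2) * vnorm2 y.
  have Py_le : vnorm2 (toC P *m y) <= vnorm2 y by rewrite -transfer_state0 vnorm2_transfer_state_le.
  have := vnorm2_transfer0_adj_range y; rewrite -lerBrDr -mulrBl => /le_trans; apply.
  by rewrite ler_wpM2l ?subr_ge0.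
have [sw0|sw_neq0] := eqVneq (sw ^+ 2) 0; first by rewrite sw0 mul0r add0r.
have sw_gt0 : 0 < sw ^+ 2 by rewrite lt_def sw_neq0 sqr_ge0.
rewrite -lerBrDr mulrC -ler_pdivlMr //; apply: sigma_max_sqr_le => [||y].
- exact: m_gt0.
- by rewrite divr_ge0 ?subr_ge0 ?sqr_ge0.
- by rewrite mulrAC ler_pdivlMr // mulrC B_le.
Qed.

Lemma hinf_norm_transfer :
  hinf_norm transfer = (Num.sqrt (sw ^+ 2 * sigmaB ^+ 2 + sv ^+ 2))%:E.
Proof.
have sqrt_sqr s : Num.sqrt (sigma_max (transfer s) ^+ 2) = sigma_max (transfer s).
  by rewrite sqrtr_sqr ger0_norm // sigma_max_ge0 // transfer_gt0.
apply/eqP; rewrite eq_le; apply/andP; split.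
  apply: ge_ereal_sup => _ [w _ <-]; rewrite lee_fin -sqrt_sqr.
  by apply: ler_wsqrtr; apply: sigma_max_transfer_le.
apply: le_trans (ereal_sup_ubound _); last by exists 0.
by rewrite lee_fin -sqrt_sqr; apply: ler_wsqrtr; apply: sigma_max_transfer0_ge.
Qed.

Lemma hinf_norm_transfer_sqr :
  (hinf_norm transfer * hinf_norm transfer)%E
    = (sw ^+ 2 * sigma_max (toC X) + sv ^+ 2)%:E.
Proof.
rewrite hinf_norm_transfer -EFinM -expr2 sqr_sqrtr; last first.
  by rewrite addr_ge0 ?sqr_ge0 // mulr_ge0 ?sqr_ge0.
by rewrite X_factor toC_mul -trmxC_real sigma_max_gram // trmxC_real.
Qed.

End TransferMatrix.

Section TreeIncidence.
Variables (R : fieldType) (n k : nat) (src tgt : 'I_(n.-1 + k) -> 'I_n).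
Hypotheses (loopless : forall l, src l != tgt l)
  (tree : spanning_tree src tgt (@first_edges n.-1 k)) (n_gt0 : (0 < n)%N).
Local Notation Dt := (lsubmx (incidence R src tgt)).

Lemma mul_incidence_tree (x : 'rV[R]_n) l :
  (x *m Dt) 0 l = x 0 (src (lshift k l)) - x 0 (tgt (lshift k l)).
Proof.
set l' := lshift k l; have st := loopless l'.
rewrite mxE (bigD1 (src l')) //= (bigD1 (tgt l')) /=; last by rewrite eq_sym.
rewrite big1 => [|i /andP[i_src i_tgt]]; rewrite !mxE.
  by rewrite eqxx (negPf st) eqxx mulr1 mulrN1 addr0.
by rewrite eq_sym (negPf i_src) eq_sym (negPf i_tgt) mulr0.
Qed.

Lemma incidence_tree_ker (x : 'rV[R]_n) : x *m Dt = 0 -> forall i j, x 0 i = x 0 j.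
Proof.
move=> xDt0 i j; pose a := [pred z | x 0 z == x 0 j].
have a_closed : fingraph.closed (adj_in src tgt (@first_edges n.-1 k)) a.
  move=> y z /existsP[l /andP[l_tree yz]]; rewrite !inE.
  have := congr1 (fun v : 'rV_n.-1 => v 0 (Ordinal l_tree)) xDt0.
  rewrite mul_incidence_tree mxE (_ : lshift k _ = l); last exact: val_inj.
  by move/eqP; rewrite subr_eq0 => /eqP; case/orP: yz => /andP[/eqP <- /eqP <-] ->.
by apply/eqP; rewrite -[_ == _]/(i \in a) (closed_connect a_closed (tree.1 i j)) inE.
Qed.

Lemma rank_incidence_tree : \rank Dt = n.-1.
Proof.
apply/eqP; rewrite eqn_leq rank_leq_col /=.
have ker_const : (kermx Dt <= (const_mx 1 : 'rV[R]_n))%MS.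
  apply/row_subP => i; have /sub_kermxP := row_sub i (kermx Dt).
  move: (row i _) => v /incidence_tree_ker vc.
  have -> : v = v 0 (Ordinal n_gt0) *: const_mx 1 by apply/rowP => j; rewrite !mxE mulr1 (vc j (Ordinal n_gt0)).
  exact: scalemx_sub.
have := mxrankS ker_const; rewrite mxrank_ker.
move=> /leq_trans/(_ (rank_leq_row (const_mx 1 : 'rV[R]_n))).
move: (\rank _) => rk; lia.
Qed.

End TreeIncidence.

Lemma rank_row_1mx (R : fieldType) p q (A : 'M[R]_(p, q)) : \rank (row_mx 1%:M A) = p.
Proof.
apply/eqP; rewrite eqn_leq rank_leq_row /=.
have := mxrankM_maxl (row_mx 1%:M A) (col_mx 1%:M (0 : 'M[R]_(q, p))).
by rewrite mul_row_col mul1mx mulmx0 addr0 mxrank1.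
Qed.

Section DiagonalWeights.
Variable R : realType.

Lemma diagfM p (f g : 'I_p -> R) : diagf f *m diagf g = diagf (fun i => f i * g i).
Proof. by rewrite /diagf mulmx_diag; congr diag_mx; apply/rowP => i; rewrite !mxE. Qed.

Lemma diagf_tr p (f : 'I_p -> R) : (diagf f)^T = diagf f.
Proof. exact: tr_diag_mx. Qed.

Lemma diagf_sqrt_sqr p (f : 'I_p -> R) : (forall i, 0 <= f i) ->
  diagf (fun i => Num.sqrt (f i)) *m diagf (fun i => Num.sqrt (f i)) = diagf f.
Proof.
by move=> f_ge0; rewrite diagfM; congr diagf; apply: funext => i; rewrite -expr2 sqr_sqrtr.
Qed.

Lemma diagf_invsqrt_sqr p (f : 'I_p -> R) : (forall i, 0 <= f i) ->
  diagf (fun i => (Num.sqrt (f i))^-1) *m diagf (fun i => (Num.sqrt (f i))^-1)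
    = diagf (fun i => (f i)^-1).
Proof.
by move=> f_ge0; rewrite diagfM; congr diagf; apply: funext => i; rewrite -invfM -expr2 sqr_sqrtr.
Qed.

Lemma diagf_unitmx p (f : 'I_p -> R) : (forall i, f i != 0) -> diagf f \in unitmx.
Proof.
move=> f_neq0; rewrite unitmxE det_diag unitfE prodf_seq_neq0.
by apply/allP => i _; rewrite mxE f_neq0.
Qed.

Lemma rank_diagf_mul p q (f : 'I_p -> R) (A : 'M[R]_(p, q)) :
  (forall i, f i != 0) -> \rank (diagf f *m A) = \rank A.
Proof. by move=> /diagf_unitmx f_unit; rewrite (eqmxMfull _ _) // row_full_unit. Qed.

End DiagonalWeights.

Theorem theorem2 (R : realType) (n k : nat) (hn : (2 <= n)%N)
    (src tgt : 'I_(n.-1 + k) -> 'I_n)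
    (hsimple : simple_edges src tgt)
    (hconn : graph_connected src tgt)
    (htree : spanning_tree src tgt (@first_edges n.-1 k))
    (w : 'I_(n.-1 + k) -> R) (hw : forall l, 0 < w l)
    (eps : 'I_n -> R) (heps : forall i, 0 < eps i)
    (sw sv : R) :
  let D := incidence R src tgt in
  let Pi := Pitau D w eps sw sv in
  let X := Xmat D w eps in
  (hinf_norm Pi * hinf_norm Pi)%E
    = (sw ^+ 2 * sigma_max (toC X) + sv ^+ 2)%:E.
Proof.
move=> D Pi X.
set Dt := Dtau D; set Es := Einvsqrt eps; set Ws := Wsqrt w; set Rm := Rmat D.
pose K := Ws *m Rm^T; pose F := Es *m Dt.
have Es_neq0 i : (Num.sqrt (eps i))^-1 != 0 by rewrite invr_eq0 gt_eqF ?sqrtr_gt0.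
have Ws_neq0 l : Num.sqrt (w l) != 0 by rewrite gt_eqF ?sqrtr_gt0.
have L_eq : Les D eps = F^T *m F.
  rewrite /Les -/Dt /F trmx_mul diagf_tr !mulmxA -[Dt^T *m Es *m Es]mulmxA.
  by rewrite diagf_invsqrt_sqr // => i; rewrite ltW.
have M_eq : Rm *m Wm w *m Rm^T = K^T *m K.
  rewrite /K trmx_mul trmxK diagf_tr !mulmxA -[Rm *m Ws *m Ws]mulmxA.
  by rewrite diagf_sqrt_sqr // => l; rewrite ltW.
have -> : Pi = transfer K F sw sv.
  apply: funext => s; rewrite /Pi /Pitau /transfer -/Dt -/Es -/Ws -/Rm L_eq -M_eq !mulmxA.
  by rewrite /K /F !trmx_mul trmxK !diagf_tr !mulmxA.
have -> : X = K *m invmx (K^T *m K *m (F^T *m F) *m (K^T *m K)) *m K^T.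
  by rewrite /X /Xmat -/Dt -/Es -/Ws -/Rm L_eq -M_eq /K [(Ws *m _)^T]trmx_mul trmxK diagf_tr !mulmxA.
apply: hinf_norm_transfer_sqr; last by rewrite -ltnS prednK // ltnW.
  by rewrite rank_diagf_mul // mxrank_tr rank_row_1mx.
by rewrite rank_diagf_mul // rank_incidence_tree ?(ltnW hn) //; case: hsimple.
Qed.
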